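(* Let $V$ be a finite connected graph and let $E_1,E_2,E_3\subseteq V$ be connected subgraphs such that every edge of $V$ lies in exactly two of $E_1,E_2,E_3$, and such that $E_1\cap E_2\cap E_3$ is a single vertex $w$. Then, after renumbering, $V$ has one of the following forms: (a) $E_1,E_2,E_3$ are all the single point $w$; (b) $E_1=\{w\}$ and $E_2=E_3=V$, and $V$ has at least one edge; (c) $V=E_1\cup E_2$ with $E_1\cap E_2=\{w\}$ (so $V=E_1\vee_wE_2$) and $E_3=V$, and each of $E_1,E_2,E_3$ has at least one edge; (d) $V=V_1\cup V_2\cup V_3$ for subgraphs $V_1,V_2,V_3$ any two of which meet exactly in $\{w\}$ (so $V=\bigvee_w V_i$), and $E_i=V_{i+1}\vee_w V_{i+2}$ (indices mod $3$), with each $E_i$ having at least one edge. *)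

(* Finite (multi)graphs: vertex finType, edge finType,
   each edge with two endpoints (loops / parallel edges allowed). *)
From mathcomp Require Import all_boot.
Set Implicit Arguments. Unset Strict Implicit. Unset Printing Implicit Defensive.

Record graph := Graph {
  gV : finType;
  gE : finType;
  src : gE -> gV;
  tgt : gE -> gV }.

(* A (candidate) subgraph: a vertex set and an edge set. *)
Record sg (G : graph) := SG { sv : {set gV G}; se : {set gE G} }.
Arguments SG {G}.

Definition is_sub (G : graph) (H : sg G) : Prop :=
  forall f, f \in se H -> src f \in sv H /\ tgt f \in sv H.

Definition full (G : graph) : sg G := SG setT setT.
Definition pt (G : graph) (w : gV G) : sg G := SG [set w] set0.
Definition sg_cup (G : graph) (H K : sg G) : sg G :=
  SG (sv H :|: sv K) (se H :|: se K).
Definition sg_cap (G : graph) (H K : sg G) : sg G :=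
  SG (sv H :&: sv K) (se H :&: se K).

Definition adj (G : graph) (B : {set gE G}) : rel (gV G) :=
  fun x y => [exists f in B, ((src f == x) && (tgt f == y))
                            || ((src f == y) && (tgt f == x))].

Definition connected (G : graph) (H : sg G) : Prop :=
  sv H != set0 /\
  forall x y, x \in sv H -> y \in sv H -> connect (adj (se H)) x y.

Definition i0 : 'I_3 := @Ordinal 3 0 isT.
Definition i1 : 'I_3 := @Ordinal 3 1 isT.
Definition i2 : 'I_3 := @Ordinal 3 2 isT.

From mathcomp Require Import all_boot all_fingroup.

(* Every edge lies in exactly two of the E_i, and so does every vertex
   x <> w: an edge at x (which exists because V is connected) lies in two of
   them, both containing x, and x is not in all three.  Hence the pairwise
   intersections V_j = E_(j+1) ∩ E_(j+2) cover V, meet pairwise in {w}, and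
   E_i = V_(i+1) ∪ V_(i+2); moreover a V_j without edges is just {w}, since a
   vertex of V_j other than w shares V_j with each of its edges.  The four
   forms (a)-(d) are the cases where 0, 1, 2 or 3 of the V_j carry edges. *)

Set Implicit Arguments.
Unset Strict Implicit.
Unset Printing Implicit Defensive.

Lemma ordS_i0 : ordS i0 = i1. Proof. exact: val_inj. Qed.
Lemma ordS_i1 : ordS i1 = i2. Proof. exact: val_inj. Qed.
Lemma ordS_i2 : ordS i2 = i0. Proof. exact: val_inj. Qed.
Definition ordSE := (ordS_i0, ordS_i1, ordS_i2).

Lemma ord3P (i : 'I_3) : [\/ i = i0, i = i1 | i = i2].
Proof.
by case: i => [[|[|[|//]]] lti]; [apply: Or31 | apply: Or32 | apply: Or33];
  apply: val_inj.
Qed.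

Lemma ordS3 (i : 'I_3) : ordS (ordS (ordS i)) = i.
Proof. by have [->|->|->] := ord3P i; rewrite !ordSE. Qed.

Lemma ordS_neq (i : 'I_3) : ordS i != i.
Proof. by have [->|->|->] := ord3P i; rewrite !ordSE. Qed.

Lemma ord3_rot (k i : 'I_3) : [\/ i = k, i = ordS k | i = ordS (ordS k)].
Proof.
by have [->|->|->] := ord3P k; have [->|->|->] := ord3P i; rewrite !ordSE;
  first [exact: Or31 | exact: Or32 | exact: Or33].
Qed.

Lemma card_ord3 (P : pred 'I_3) : #|[set i | P i]| = (P i0 + P i1 + P i2)%N.
Proof.
rewrite -sum1_card big_mkcond /= !big_ord_recl big_ord0 !inE addn0 addnA.
by congr (_ + _ + _)%N; [congr (nat_of_bool (P _))..]; apply: val_inj.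
Qed.

Lemma exists_rot3 k :
  exists s : {perm 'I_3}, [/\ s i0 = k, s i1 = ordS k & s i2 = ordS (ordS k)].
Proof.
pose r : {perm 'I_3} := perm (@ordS_inj 3).
have [->|->|->] := ord3P k; [exists 1%g | exists r | exists (r * r)%g];
  by rewrite ?perm1 ?permM ?permE ?ordSE.
Qed.

Lemma sg_ext (G : graph) (H K : sg G) : sv H = sv K -> se H = se K -> H = K.
Proof. by case: H; case: K => ? ? ? ? /= -> ->. Qed.

Section Subgraphs.
Variable G : graph.
Implicit Types (H K L : sg G) (w x y : gV G) (f : gE G).

Lemma sg_cupC H K : sg_cup H K = sg_cup K H.
Proof. by apply: sg_ext; rewrite /= setUC. Qed.

Lemma sg_cupA H K L : sg_cup H (sg_cup K L) = sg_cup (sg_cup H K) L.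
Proof. by apply: sg_ext; rewrite /= setUA. Qed.

Lemma sg_cupI H : sg_cup H H = H.
Proof. by apply: sg_ext; rewrite /= setUid. Qed.

Lemma sg_cup_ptl w H : w \in sv H -> sg_cup (pt w) H = H.
Proof.
by move=> Hw; apply: sg_ext; rewrite /= ?set0U // setUC; apply/setUidPl;
  rewrite sub1set.
Qed.

Lemma sg_cup_ptr w H : w \in sv H -> sg_cup H (pt w) = H.
Proof. by move=> Hw; rewrite sg_cupC sg_cup_ptl. Qed.

Lemma is_sub_cap H K : is_sub H -> is_sub K -> is_sub (sg_cap H K).
Proof.
move=> subH subK f /=; rewrite !inE => /andP[/subH[sH tH] /subK[sK tK]].
by rewrite sH tH sK tK.
Qed.

Lemma is_sub_endpoint H f x :
  is_sub H -> f \in se H -> (src f == x) || (tgt f == x) -> x \in sv H.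
Proof. by move=> subH /subH[sH tH] /orP[] /eqP <-. Qed.

Lemma connected_incident x y :
  connected (full G) -> x != y -> exists f, (src f == x) || (tgt f == x).
Proof.
case=> _ /(_ x y (in_setT x) (in_setT y)) /connectP[[|z p] /= xp ->].
  by rewrite eqxx.
case/andP: xp => /existsP[f /andP[_ /orP[/andP[fx _] | /andP[_ fx]]]] _ _;
  by exists f; rewrite fx ?orbT.
Qed.

End Subgraphs.

Section ThreeSets.
Variables (T : finType) (A : 'I_3 -> {set T}).

Definition others_cap (j : 'I_3) : {set T} := A (ordS j) :&: A (ordS (ordS j)).

Lemma others_cap_meet i j :
  i != j -> others_cap i :&: others_cap j = A i0 :&: A i1 :&: A i2.
Proof.
have [->|->|->] := ord3P i; have [->|->|->] := ord3P j; rewrite ?eqxx // => _;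
  apply/setP => t; rewrite /others_cap !ordSE !inE;
  by case: (t \in A i0); case: (t \in A i1); case: (t \in A i2).
Qed.

Hypothesis cover2 : forall t, 1 < #|[set i | t \in A i]|.

Lemma others_cap_cover :
  others_cap i0 :|: others_cap i1 :|: others_cap i2 = setT.
Proof.
apply/setP => t; move: (cover2 t); rewrite card_ord3 /others_cap !ordSE !inE.
by case: (t \in A i0); case: (t \in A i1); case: (t \in A i2).
Qed.

Lemma others_capU i : A i = others_cap (ordS i) :|: others_cap (ordS (ordS i)).
Proof.
apply/setP => t; move: (cover2 t); rewrite card_ord3 /others_cap !inE.
by have [->|->|->] := ord3P i; rewrite !ordSE;
  case: (t \in A i0); case: (t \in A i1); case: (t \in A i2).
Qed.

End ThreeSets.

Section PairDecomposition.
Variables (G : graph) (Es : 'I_3 -> sg G) (w : gV G).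
Hypotheses (connG : connected (full G)) (subEs : forall i, is_sub (Es i))
  (edge2 : forall f : gE G, #|[set i | f \in se (Es i)]| = 2)
  (capEs : sg_cap (sg_cap (Es i0) (Es i1)) (Es i2) = pt w).

Definition sg_others_cap (j : 'I_3) : sg G :=
  sg_cap (Es (ordS j)) (Es (ordS (ordS j))).

Lemma in_all_Es x :
  [&& x \in sv (Es i0), x \in sv (Es i1) & x \in sv (Es i2)] = (x == w).
Proof. by case: capEs => /setP /(_ x); rewrite !inE andbA. Qed.

Lemma w_in_Es i : w \in sv (Es i).
Proof.
move: (in_all_Es w); rewrite eqxx => /and3P[? ? ?].
by have [->|->|->] := ord3P i.
Qed.

Lemma incident_edge x :
  x != w -> exists f, forall i, f \in se (Es i) -> x \in sv (Es i).
Proof.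
move=> xw; have [f fx] := connected_incident connG xw.
by exists f => i fi; apply: is_sub_endpoint fi fx.
Qed.

Lemma vertex_cover2 x : 1 < #|[set i | x \in sv (Es i)]|.
Proof.
have [->|xw] := eqVneq x w.
  by rewrite card_ord3 !w_in_Es.
have [f fx] := incident_edge xw.
have fx_sub : [set i | f \in se (Es i)] \subset [set i | x \in sv (Es i)].
  by apply/subsetP => i; rewrite !inE; apply: fx.
by move: (subset_leq_card fx_sub); rewrite edge2.
Qed.

Lemma is_sub_others_cap j : is_sub (sg_others_cap j).
Proof. exact: is_sub_cap. Qed.

Lemma others_cap_cup_full :
  sg_cup (sg_cup (sg_others_cap i0) (sg_others_cap i1)) (sg_others_cap i2)
  = full G.
Proof.
apply: sg_ext; first exact: others_cap_cover vertex_cover2.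
by apply: (@others_cap_cover _ (fun i => se (Es i))) => f; rewrite edge2.
Qed.

Lemma others_cap_meet_pt i j :
  i != j -> sg_cap (sg_others_cap i) (sg_others_cap j) = pt w.
Proof.
move=> ij; case: capEs => svE seE; apply: sg_ext => /=.
  by rewrite -svE; exact: (@others_cap_meet _ (fun k => sv (Es k))).
by rewrite -seE; exact: (@others_cap_meet _ (fun k => se (Es k))).
Qed.

Lemma Es_others_cup i :
  Es i = sg_cup (sg_others_cap (ordS i)) (sg_others_cap (ordS (ordS i))).
Proof.
apply: sg_ext; first exact: others_capU vertex_cover2 i.
by apply: (@others_capU _ (fun i => se (Es i))) => f; rewrite edge2.
Qed.

Lemma others_cap_edgeless j :
  se (sg_others_cap j) = set0 -> sg_others_cap j = pt w.
Proof.
move=> edgeless; apply: sg_ext => //=; apply/setP => x; rewrite !inE.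
have [->|xw] := eqVneq x w; first by rewrite !w_in_Es.
apply/negbTE/negP => xj; have [f fx] := incident_edge xw.
suff: f \in se (sg_others_cap j) by rewrite edgeless inE.
move: (edge2 f) (in_all_Es x) (fx i0) (fx i1) (fx i2) xj.
rewrite card_ord3 (negbTE xw) /= !inE.
have [->|->|->] := ord3P j; rewrite !ordSE;
  by case: (f \in se (Es i0)); case: (f \in se (Es i1));
     case: (f \in se (Es i2)); case: (x \in sv (Es i0));
     case: (x \in sv (Es i1)); case: (x \in sv (Es i2)).
Qed.

End PairDecomposition.

Definition wedge_forms (G : graph) (Es : 'I_3 -> sg G) (w : gV G) : Prop :=
  exists s : {perm 'I_3},
    let K := fun i => Es (s i) in
    [\/ (forall i, K i = pt w),
        [/\ K i0 = pt w, K i1 = full G, K i2 = full G & (0 < #|gE G|)%N],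
        [/\ sg_cup (K i0) (K i1) = full G, sg_cap (K i0) (K i1) = pt w,
            K i2 = full G & forall i, se (K i) != set0]
      | exists Vs : 'I_3 -> sg G,
          [/\ (forall i, is_sub (Vs i)),
              sg_cup (sg_cup (Vs i0) (Vs i1)) (Vs i2) = full G,
              (forall i j, i != j -> sg_cap (Vs i) (Vs j) = pt w),
              (forall i, K i = sg_cup (Vs (ordS i)) (Vs (ordS (ordS i))))
            & forall i, se (K i) != set0]].

Section Classification.
Variables (G : graph) (w : gV G) (Es Vs : 'I_3 -> sg G).
Hypotheses (EsV : forall i, Es i = sg_cup (Vs (ordS i)) (Vs (ordS (ordS i))))
  (subV : forall i, is_sub (Vs i))
  (cupV : sg_cup (sg_cup (Vs i0) (Vs i1)) (Vs i2) = full G)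
  (capV : forall i j, i != j -> sg_cap (Vs i) (Vs j) = pt w)
  (edgelessV : forall j, se (Vs j) = set0 -> Vs j = pt w).

Lemma w_in_Vs j : w \in sv (Vs j).
Proof.
by case: (capV (ordS_neq j)) => /setP /(_ w); rewrite !inE eqxx => /andP[].
Qed.

Lemma sg_cup_pt_V j : sg_cup (pt w) (Vs j) = Vs j.
Proof. exact/sg_cup_ptl/w_in_Vs. Qed.

Lemma sg_cup_V_pt j : sg_cup (Vs j) (pt w) = Vs j.
Proof. exact/sg_cup_ptr/w_in_Vs. Qed.

Lemma Vs_cup_rot k :
  sg_cup (Vs k) (sg_cup (Vs (ordS k)) (Vs (ordS (ordS k)))) = full G.
Proof.
rewrite -cupV; have [->|->|->] := ord3P k; rewrite !ordSE ?sg_cupA //.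
  by rewrite sg_cupC sg_cupA.
by rewrite [in RHS]sg_cupC sg_cupA.
Qed.

Lemma se_Es_neq0 i :
  (se (Es i) != set0)
  = (se (Vs (ordS i)) != set0) || (se (Vs (ordS (ordS i))) != set0).
Proof. by rewrite EsV /= setU_eq0 negb_and. Qed.

Lemma wedge_forms_no_edges : (forall j, Vs j = pt w) -> wedge_forms Es w.
Proof.
move=> Vpt; exists 1%g; apply: Or41 => i.
by rewrite perm1 EsV !Vpt sg_cupI.
Qed.

Lemma wedge_forms_one_edged k :
  Vs (ordS k) = pt w -> Vs (ordS (ordS k)) = pt w -> se (Vs k) != set0 ->
  wedge_forms Es w.
Proof.
move=> V1 V2 Vk_edged; have [s [s0 s1 s2]] := exists_rot3 k.
have Vk_full : Vs k = full G.
  by rewrite -(Vs_cup_rot k) V1 V2 sg_cupI sg_cup_V_pt.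
exists s; apply: Or42.
rewrite s0 s1 s2 !EsV ordS3 V1 V2 sg_cupI sg_cup_pt_V sg_cup_V_pt; split=> //.
by case/set0Pn: Vk_edged => f _; apply/card_gt0P; exists f.
Qed.

Lemma wedge_forms_one_edgeless k :
  Vs k = pt w -> se (Vs (ordS k)) != set0 -> se (Vs (ordS (ordS k))) != set0 ->
  wedge_forms Es w.
Proof.
move=> V0 V1_edged V2_edged; have [s [s0 s1 s2]] := exists_rot3 (ordS k).
have Es_edge i : se (Es i) != set0.
  rewrite se_Es_neq0; have [->|->|->] := ord3_rot k i;
  by rewrite ?ordS3 ?V1_edged ?V2_edged ?orbT.
exists s; apply: Or43; rewrite s0 s1 s2 !EsV ordS3 V0 sg_cup_pt_V sg_cup_V_pt.
have V12_full : sg_cup (Vs (ordS k)) (Vs (ordS (ordS k))) = full G.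
  by rewrite -(Vs_cup_rot k) V0 sg_cup_ptl //= inE w_in_Vs.
by split=> //; [rewrite sg_cupC | apply/capV/ordS_neq].
Qed.

Lemma wedge_forms_all_edged : (forall j, se (Vs j) != set0) -> wedge_forms Es w.
Proof.
move=> V_edged; exists 1%g; apply: Or44; exists Vs.
by split=> // i; rewrite perm1 // se_Es_neq0 V_edged.
Qed.

Lemma wedge_forms_of_pairs : wedge_forms Es w.
Proof.
have edgeless_or_edged j : Vs j = pt w \/ se (Vs j) != set0.
  by have [/edgelessV|] := eqVneq (se (Vs j)) set0; [left | right].
have [/forallP V_edged | /forallPn[j /negPn/eqP/edgelessV V0]] :=
  boolP [forall j, se (Vs j) != set0].
  exact: wedge_forms_all_edged.
have [V1|V1_edged] := edgeless_or_edged (ordS j);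
  have [V2|V2_edged] := edgeless_or_edged (ordS (ordS j)).
- by apply: wedge_forms_no_edges => i; have [->|->|->] := ord3_rot j i.
- by apply: (wedge_forms_one_edged (k := ordS (ordS j))); rewrite ?ordS3.
- by apply: (wedge_forms_one_edged (k := ordS j)); rewrite ?ordS3.
- exact: (wedge_forms_one_edgeless V0).
Qed.

End Classification.

Theorem lemma4p4 (G : graph) (Es : 'I_3 -> sg G) (w : gV G) :
  connected (full G) ->
  (forall i, is_sub (Es i)) ->
  (forall i, connected (Es i)) ->
  (forall f : gE G, #|[set i | f \in se (Es i)]| = 2) ->
  sg_cap (sg_cap (Es i0) (Es i1)) (Es i2) = pt w ->
  exists s : {perm 'I_3},
    let K := fun i => Es (s i) in
    [\/ (forall i, K i = pt w),
        [/\ K i0 = pt w, K i1 = full G, K i2 = full G & (0 < #|gE G|)%N],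
        [/\ sg_cup (K i0) (K i1) = full G, sg_cap (K i0) (K i1) = pt w,
            K i2 = full G & forall i, se (K i) != set0]
      | exists Vs : 'I_3 -> sg G,
          [/\ (forall i, is_sub (Vs i)),
              sg_cup (sg_cup (Vs i0) (Vs i1)) (Vs i2) = full G,
              (forall i j, i != j -> sg_cap (Vs i) (Vs j) = pt w),
              (forall i, K i = sg_cup (Vs (ordS i)) (Vs (ordS (ordS i))))
            & forall i, se (K i) != set0]].
Proof.
move=> connG subEs _ edge2 capEs. (* the E_i need not be connected *)
have Es_cup := Es_others_cup connG subEs edge2 capEs.
have V_full := others_cap_cup_full connG subEs edge2 capEs.
have V_edgeless := others_cap_edgeless connG subEs edge2 capEs.
exact: wedge_forms_of_pairs Es_cup (is_sub_others_cap subEs) V_full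
  (others_cap_meet_pt capEs) V_edgeless.
Qed.
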